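(* Let $X,Y,I\subseteq\mathbb{R}^n$. Then $(X\cup Y)+I=(X+I)\cup(Y+I)$. If moreover $X$ and $Y$ are closed with $X\cup Y$ $\ell_1$-convex, and $I$ is an interval, then also $(X\cap Y)+I=(X+I)\cap(Y+I)$.
   Context: $+$ denotes Minkowski sum. A subset $Z\subseteq\mathbb{R}^n$ is $\ell_1$-convex if for all $z,z'\in Z$, with $D=\sum_i|z_i-z'_i|$, there is $\gamma\colon[0,D]\to Z$ with $\gamma(0)=z,\gamma(D)=z'$ and $\sum_i|\gamma_i(t)-\gamma_i(t')|=|t-t'|$ for all $t,t'$. An interval in $\mathbb{R}^n$ is a set $\prod_{i=1}^n I_i$ with each $I_i\subseteq\mathbb{R}$ a (possibly empty, possibly unbounded) interval. *)

From HB Require Import structures.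
From mathcomp Require Import all_boot all_order all_algebra.
From mathcomp Require Import all_classical all_reals all_analysis.
Set Implicit Arguments. Unset Strict Implicit. Unset Printing Implicit Defensive.
Import Order.TTheory GRing.Theory Num.Theory.
Import numFieldTopology.Exports numFieldNormedType.Exports.
Local Open Scope classical_set_scope.
Local Open Scope ring_scope.

Definition mink_sum {R : realType} {n : nat} (X Y : set 'rV[R]_n) : set 'rV[R]_n :=
  [set z | exists x, X x /\ exists y, Y y /\ z = x + y].

Definition dist1 {R : realType} {n : nat} (z z' : 'rV[R]_n) : R :=
  \sum_(i < n) `|z ord0 i - z' ord0 i|.

(* l1-convexity as in the paper: any two points joined by an l1-geodesic
   gamma : [0,D] -> Z, D = dist1 z z' (gamma is given on R, only its
   restriction to [0,D] matters). *)
Definition l1_convex {R : realType} {n : nat} (Z : set 'rV[R]_n) : Prop :=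
  forall z z', Z z -> Z z' ->
    exists gamma : R -> 'rV[R]_n,
      gamma 0 = z /\ gamma (dist1 z z') = z' /\
      (forall t, 0 <= t <= dist1 z z' -> Z (gamma t)) /\
      (forall t t', 0 <= t <= dist1 z z' -> 0 <= t' <= dist1 z z' ->
         dist1 (gamma t) (gamma t') = `|t - t'|).

Definition interval_Rn {R : realType} {n : nat} (I : set 'rV[R]_n) : Prop :=
  exists Ii : 'I_n -> set R,
    (forall i, is_interval (Ii i)) /\ I = [set x | forall i, Ii i (x ord0 i)].

From HB Require Import structures.
From mathcomp Require Import all_boot all_order all_algebra.
From mathcomp Require Import all_classical all_reals all_analysis.
From mathcomp Require Import lra ring.
Import Order.TTheory GRing.Theory Num.Theory.
Import numFieldTopology.Exports numFieldNormedType.Exports.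
Local Open Scope classical_set_scope.
Local Open Scope ring_scope.
Set Implicit Arguments. Unset Strict Implicit.

(* The union identity is pure set algebra.  For the intersection, write
   z = x + a = y + b with x in X, y in Y and a, b in I, and follow an
   l1-geodesic from x to y inside X u Y.  Since X and Y are closed, the
   geodesic passes through a point g of X n Y.  As g lies l1-between x and y,
   each coordinate of z - g lies between those of z - x = a and z - y = b,
   so z - g belongs to the product of intervals I, and z = g + (z - g). *)

Section MinkowskiSum.
Variables (R : realType) (n : nat).
Implicit Types (X Y I : set 'rV[R]_n) (z : 'rV[R]_n).

Lemma mink_sumE X I : mink_sum X I = [set z | exists2 x, X x & I (z - x)].
Proof.
apply/seteqP; split=> z.
  by move=> [x [Xx [a [Ia ->]]]]; exists x => //; rewrite addrAC subrr add0r.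
by move=> [x Xx Ia]; exists x; split=> //; exists (z - x); rewrite addrCA subrr addr0.
Qed.

Lemma mink_sumUl X Y I : mink_sum (X `|` Y) I = mink_sum X I `|` mink_sum Y I.
Proof.
rewrite !mink_sumE; apply/seteqP; split=> z.
  by move=> [x [Xx|Yx] Ia]; [left|right]; exists x.
by move=> [][x Xx Ia]; exists x => //; [left|right].
Qed.

Lemma mink_sumIl_sub X Y I :
  mink_sum (X `&` Y) I `<=` mink_sum X I `&` mink_sum Y I.
Proof. by rewrite !mink_sumE => z [x [Xx Yx] Ia]; split; exists x. Qed.

End MinkowskiSum.

Section L1Distance.
Variables (R : realType) (n : nat).
Implicit Types (x y z g : 'rV[R]_n).

Lemma dist1_ge0 x y : 0 <= dist1 x y.
Proof. by rewrite /dist1 sumr_ge0. Qed.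

Lemma ler_coord_dist1 x y i : `|x ord0 i - y ord0 i| <= dist1 x y.
Proof. by rewrite /dist1 (bigD1 i) //= lerDl sumr_ge0. Qed.

Lemma dist1_ball x y e : dist1 x y < e -> ball x e y.
Proof.
move=> lt_xy; have e_gt0 : 0 < e by exact: le_lt_trans (dist1_ge0 x y) lt_xy.
split=> // i j; rewrite (ord1 i) /ball /=.
exact: le_lt_trans (ler_coord_dist1 x y j) lt_xy.
Qed.

Lemma dist1_subl z x y : dist1 (z - x) (z - y) = dist1 x y.
Proof.
apply: eq_bigr => i _; rewrite !mxE -normrN; congr `|_|; ring.
Qed.

(* Equality in the triangle inequality for a sum of coordinatewise triangle
   inequalities forces equality in each coordinate. *)
Lemma dist1_between_coord x g y :
  dist1 x g + dist1 g y = dist1 x y -> forall i,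
  `|x ord0 i - g ord0 i| + `|g ord0 i - y ord0 i| = `|x ord0 i - y ord0 i|.
Proof.
move=> between i; apply/eqP; rewrite -subr_eq0; apply/eqP.
pose slack j := `|x ord0 j - g ord0 j| + `|g ord0 j - y ord0 j|
                - `|x ord0 j - y ord0 j|.
apply: (@psumr_eq0P _ _ predT slack _ _ i isT).
  move=> j _; rewrite subr_ge0.
  by rewrite -[x ord0 j - y ord0 j](subrKA (g ord0 j)) ler_normD.
by rewrite sumrB big_split /= -/(dist1 x g) -/(dist1 g y) -/(dist1 x y)
  between subrr.
Qed.

End L1Distance.

Lemma between_norm (R : realType) (a b c : R) :
  `|a - c| + `|c - b| = `|a - b| -> a <= b -> a <= c <= b.
Proof.
move=> h le_ab.
case: (lerP 0 (a - c)) => h1; rewrite ?(ger0_norm h1) ?(ltr0_norm h1) in h;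
case: (lerP 0 (c - b)) => h2; rewrite ?(ger0_norm h2) ?(ltr0_norm h2) in h;
case: (lerP 0 (a - b)) => h3; rewrite ?(ger0_norm h3) ?(ltr0_norm h3) in h;
apply/andP; split; lra.
Qed.

Lemma is_interval_between (R : realType) (E : set R) a b c :
  is_interval E -> E a -> E b -> `|a - c| + `|c - b| = `|a - b| -> E c.
Proof.
move=> iE Ea Eb h; case: (leP a b) => [le_ab|lt_ba].
  exact: (iE a b) (between_norm h le_ab).
apply: (iE b a) => //; apply: between_norm (ltW lt_ba).
by rewrite (distrC b c) (distrC c a) (distrC b a) addrC.
Qed.

Lemma interval_Rn_between (R : realType) n (I : set 'rV[R]_n) a b c :
  interval_Rn I -> I a -> I b -> dist1 a c + dist1 c b = dist1 a b -> I c.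
Proof.
move=> [Ii [iIi ->]] Ia Ib between i.
exact: is_interval_between (iIi i) (Ia i) (Ib i) (dist1_between_coord between i).
Qed.

Lemma l1_geodesic_between (R : realType) n (x y : 'rV[R]_n)
    (gam : R -> 'rV[R]_n) t :
  gam 0 = x -> gam (dist1 x y) = y ->
  (forall t t', 0 <= t <= dist1 x y -> 0 <= t' <= dist1 x y ->
     dist1 (gam t) (gam t') = `|t - t'|) ->
  0 <= t <= dist1 x y -> dist1 x (gam t) + dist1 (gam t) y = dist1 x y.
Proof.
move=> g0 gD gd /andP[t_ge0 t_leD].
have D_ge0 := dist1_ge0 x y.
have I0 : (0 : R) <= 0 <= dist1 x y by rewrite lexx D_ge0.
have ID : 0 <= dist1 x y <= dist1 x y by rewrite lexx D_ge0.
have It : 0 <= t <= dist1 x y by rewrite t_ge0 t_leD.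
have -> : dist1 x (gam t) = t by rewrite -[in LHS]g0 gd // sub0r normrN ger0_norm.
have -> : dist1 (gam t) y = dist1 x y - t.
  by rewrite -[in LHS]gD gd // distrC ger0_norm // subr_ge0.
by rewrite addrC subrK.
Qed.

Section PathCrossing.
Variables (R : realType) (n : nat) (gam : R -> 'rV[R]_n) (D : R).
Hypothesis gam_lip : forall t t', 0 <= t <= D -> 0 <= t' <= D ->
  dist1 (gam t) (gam t') <= `|t - t'|.

Lemma closed_path_adherent (Z : set 'rV[R]_n) s : closed Z -> 0 <= s <= D ->
  (forall e, 0 < e -> exists2 t, 0 <= t <= D /\ Z (gam t) & `|s - t| < e) ->
  Z (gam s).
Proof.
move=> cZ sI near_s; apply: cZ => B /nbhs_ballP[e e_gt0 eB].
have [t [tI Zt] st] := near_s e e_gt0.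
exists (gam t); split=> //; apply/eB/dist1_ball.
exact: le_lt_trans (gam_lip sI tI) st.
Qed.

(* The first time the path enters Y is also a limit of times at which it is
   in X, so by closedness it lies in both. *)
Lemma closed_cover_path_meet (X Y : set 'rV[R]_n) :
  closed X -> closed Y -> 0 <= D -> X (gam 0) -> Y (gam D) ->
  (forall t, 0 <= t <= D -> (X `|` Y) (gam t)) ->
  exists2 t, 0 <= t <= D & (X `&` Y) (gam t).
Proof.
move=> cX cY D_ge0 X0 YD cover.
pose S := [set t | 0 <= t <= D /\ Y (gam t)].
have SD : S D by split; rewrite ?lexx ?D_ge0.
have lbS : has_lbound S by exists 0 => t [/andP[]].
have infS : has_inf S by split; [exists D|].
pose s := inf S.
have s_le t : S t -> s <= t := fun St => ge_inf lbS St.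
have s_ge0 : 0 <= s by apply: lb_le_inf; [exists D | move=> t [/andP[]]].
have sI : 0 <= s <= D by rewrite s_ge0 (s_le D SD).
exists s => //; split; last first.
  apply: closed_path_adherent => // e e_gt0.
  have [t St ts] := inf_adherent e_gt0 infS.
  exists t => //; rewrite distrC ger0_norm ?subr_ge0 ?s_le //.
  by rewrite -/s in ts; lra.
apply: closed_path_adherent => // e e_gt0.
have [lt_es|le_se] := ltP (e / 2) s.
  have tI : 0 <= s - e / 2 <= D by apply/andP; split; case/andP: sI => *; lra.
  exists (s - e / 2); last by rewrite opprB addrC subrK ger0_norm; lra.
  split=> //; case: (cover _ tI) => // Yt.
  by have := s_le _ (conj tI Yt); lra.
exists 0; first by rewrite lexx D_ge0.
by rewrite subr0 ger0_norm //; lra.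
Qed.

End PathCrossing.

Lemma mink_sumIl (R : realType) n (X Y I : set 'rV[R]_n) :
  closed X -> closed Y -> l1_convex (X `|` Y) -> interval_Rn I ->
  mink_sum (X `&` Y) I = mink_sum X I `&` mink_sum Y I.
Proof.
move=> cX cY l1XY intI; apply/seteqP; split; first exact: mink_sumIl_sub.
rewrite !mink_sumE => z [[x Xx Ia] [y Yy Ib]].
have [gam [g0 [gD [gXY gd]]]] := l1XY x y (or_introl Xx) (or_intror Yy).
have [t tI XYt] : exists2 t, 0 <= t <= dist1 x y & (X `&` Y) (gam t).
  apply: (@closed_cover_path_meet _ _ gam) => //.
  - by move=> t t' tI t'I; rewrite gd.
  - exact: dist1_ge0.
  - by rewrite g0.
  - by rewrite gD.
exists (gam t) => //; apply: interval_Rn_between intI Ia Ib _.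
by rewrite !dist1_subl (l1_geodesic_between g0 gD gd tI).
Qed.

Theorem proposition2p4 (R : realType) (n : nat) (X Y I : set 'rV[R]_n) :
  mink_sum (X `|` Y) I = mink_sum X I `|` mink_sum Y I /\
  (closed X -> closed Y -> l1_convex (X `|` Y) -> interval_Rn I ->
   mink_sum (X `&` Y) I = mink_sum X I `&` mink_sum Y I).
Proof. by split; [exact: mink_sumUl | exact: mink_sumIl]. Qed.
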